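(* Fix $m\ge1$, $n\ge0$ and $i\in Ag$. Every labelled sequent derivable in $\mathsf{G3Ldm}_{n}^{m}+\mathsf{PR}$ is derivable in $\mathsf{G3Ldm}_{n}^{m}+\mathsf{PR}$ without any use of the rule $(\mathsf{refl}_i)$.
   Context: Language. $Ag=\{1,\dots,m\}$, $Var$ a countable set of propositional variables; formulas $\phi ::= p \mid \overline{p} \mid (\phi\wedge\phi) \mid (\phi\vee\phi) \mid \Box\phi \mid \Diamond\phi \mid [i]\phi \mid \langle i\rangle\phi$. Labelled sequents $\mathcal{R},\Gamma$: $\mathcal{R}$ a multiset of relational atoms $\mathcal{R}_ixy$, $\Gamma$ a multiset of labelled formulas $x:\phi$. Derivations are finite trees whose leaves are $(\mathsf{id})$ instances. Rules of $\mathsf{G3Ldm}_{n}^{m}$ (premise(s) / conclusion): $(\mathsf{id})$: / $\mathcal{R}, w:p, w:\overline{p},\Gamma$. $(\wedge)$: $\mathcal{R}, w:\phi\wedge\psi, w:\phi,\Gamma$ and $\mathcal{R}, w:\phi\wedge\psi, w:\psi,\Gamma$ / $\mathcal{R}, w:\phi\wedge\psi,\Gamma$. $(\vee)$: $\mathcal{R}, w:\phi\vee\psi, w:\phi, w:\psi,\Gamma$ / $\mathcal{R}, w:\phi\vee\psi,\Gamma$. $([i])$: $\mathcal{R},\mathcal{R}_iwv, v:\phi,\Gamma$ / $\mathcal{R}, w:[i]\phi,\Gamma$ ($v$ fresh). $(\Box)$: $\mathcal{R}, w:\Box\phi, v:\phi,\Gamma$ / $\mathcal{R}, w:\Box\phi,\Gamma$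 ($v$ fresh). $(\Diamond)$: $\mathcal{R}, w:\Diamond\phi, u:\phi,\Gamma$ / $\mathcal{R}, w:\Diamond\phi,\Gamma$. $(\mathsf{IOA})$: $\mathcal{R},\mathcal{R}_1u_1v,\dots,\mathcal{R}_mu_mv,\Gamma$ / $\mathcal{R},\Gamma$ ($v$ fresh). $(\langle i\rangle)$: $\mathcal{R},\mathcal{R}_iwu, w:\langle i\rangle\phi, u:\phi,\Gamma$ / $\mathcal{R},\mathcal{R}_iwu, w:\langle i\rangle\phi,\Gamma$. $(\mathsf{refl}_i)$: $\mathcal{R},\mathcal{R}_iww,\Gamma$ / $\mathcal{R},\Gamma$. $(\mathsf{eucl}_i)$: $\mathcal{R},\mathcal{R}_iwu,\mathcal{R}_iwv,\mathcal{R}_iuv,\Gamma$ / $\mathcal{R},\mathcal{R}_iwu,\mathcal{R}_iwv,\Gamma$. $(\mathsf{APC}^i_n)$ (only if $n>0$): premises $\mathcal{R},\mathcal{R}_iw_kw_j,\Gamma$ for all $0\le k\le n-1$, $k+1\le j\le n$ / $\mathcal{R},\Gamma$. ''Fresh'' means not occurring in the conclusion. One copy of the indexed rules for each agent. $\mathsf{G3Ldm}_{n}^{m}+\mathsf{PR}$ adds, for each $i\in Ag$, the propagation rule $(\mathsf{Pr}_i)$: $\mathcal{R}, w:\langle i\rangle\phi, u:\phi,\Gamma$ / $\mathcal{R}, w:\langle i\rangle\phi,\Gamma$, applicable only if $w=u$ or there are labels $w=z_0,\dots,z_k=u$ ($k\ge1$) with $\mathcal{R}_iz_lz_{l+1}\in\mathcal{R}$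 or $\mathcal{R}_iz_{l+1}z_l\in\mathcal{R}$ for each $l<k$. *)

From mathcomp Require Import all_boot.
From Stdlib Require Import List Permutation Relations.

Set Implicit Arguments.
Unset Strict Implicit.
Unset Printing Implicit Defensive.

(* Agents Ag = {1,...,m} are represented by 'I_m = {0,...,m-1}. *)
Definition agent (m : nat) := 'I_m.
Definition var := nat.
Definition label := nat.

Inductive form (m : nat) : Type :=
| Var   : var -> form m
| NVar  : var -> form m
| And   : form m -> form m -> form m
| Or    : form m -> form m -> form m
| Box   : form m -> form m
| Dia   : form m -> form m
| BoxA  : 'I_m -> form m -> form m
| DiaA  : 'I_m -> form m -> form m.

Definition ratom (m : nat) := ('I_m * label * label)%type.
Definition lform (m : nat) := (label * form m)%type.

(* A labelled sequent R, Gamma: two multisets, represented as lists taken up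
   to permutation (see rule d_perm). *)
Definition sequent (m : nat) := (list (ratom m) * list (lform m))%type.

Definition labels_R m (R : list (ratom m)) : list label :=
  flat_map (fun a : ratom m => let '(_, x, y) := a in [:: x; y]) R.
Definition labels_G m (G : list (lform m)) : list label :=
  map (fun a : lform m => a.1) G.
Definition fresh m (v : label) (R : list (ratom m)) (G : list (lform m)) : Prop :=
  ~ In v (labels_R R) /\ ~ In v (labels_G G).

(* Undirected R_i-step, and its reflexive-transitive closure: the side
   condition of (Pr_i): w = u or a chain w = z0,...,zk = u with R_i z_l z_{l+1}
   or R_i z_{l+1} z_l in R. *)
Definition istep m (i : 'I_m) (R : list (ratom m)) (x y : label) : Prop :=
  In (i, x, y) R \/ In (i, y, x) R.
Definition iconnected m (i : 'I_m) (R : list (ratom m)) : label -> label -> Prop :=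
  clos_refl_trans label (istep i R).

(* Derivability in G3Ldm^m_n + PR, where (refl_i) may only be used for agents
   i with [reflOK i = true]. *)
Inductive derivable (m n : nat) (reflOK : 'I_m -> bool) : sequent m -> Prop :=
| d_perm : forall R R' G G',
    Permutation R R' -> Permutation G G' ->
    derivable n reflOK (R, G) -> derivable n reflOK (R', G')
| d_id : forall R G w p,
    derivable n reflOK (R, (w, Var m p) :: (w, NVar m p) :: G)
| d_and : forall R G w A B,
    derivable n reflOK (R, (w, And A B) :: (w, A) :: G) ->
    derivable n reflOK (R, (w, And A B) :: (w, B) :: G) ->
    derivable n reflOK (R, (w, And A B) :: G)
| d_or : forall R G w A B,
    derivable n reflOK (R, (w, Or A B) :: (w, A) :: (w, B) :: G) ->
    derivable n reflOK (R, (w, Or A B) :: G)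
| d_boxA : forall R G w v (i : 'I_m) A,
    fresh v R ((w, BoxA i A) :: G) ->
    derivable n reflOK ((i, w, v) :: R, (v, A) :: G) ->
    derivable n reflOK (R, (w, BoxA i A) :: G)
| d_box : forall R G w v A,
    fresh v R ((w, Box A) :: G) ->
    derivable n reflOK (R, (w, Box A) :: (v, A) :: G) ->
    derivable n reflOK (R, (w, Box A) :: G)
| d_dia : forall R G w u A,
    derivable n reflOK (R, (w, Dia A) :: (u, A) :: G) ->
    derivable n reflOK (R, (w, Dia A) :: G)
| d_ioa : forall R G (u : 'I_m -> label) v,
    fresh v R G ->
    derivable n reflOK (map (fun j => (j, u j, v)) (enum 'I_m) ++ R, G) ->
    derivable n reflOK (R, G)
| d_diaA : forall R G (i : 'I_m) w u A,
    derivable n reflOK ((i, w, u) :: R, (w, DiaA i A) :: (u, A) :: G) ->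
    derivable n reflOK ((i, w, u) :: R, (w, DiaA i A) :: G)
| d_refl : forall R G (i : 'I_m) w,
    reflOK i ->
    derivable n reflOK ((i, w, w) :: R, G) ->
    derivable n reflOK (R, G)
| d_eucl : forall R G (i : 'I_m) w u v,
    derivable n reflOK ((i, w, u) :: (i, w, v) :: (i, u, v) :: R, G) ->
    derivable n reflOK ((i, w, u) :: (i, w, v) :: R, G)
| d_apc : forall R G (i : 'I_m) (ws : nat -> label),
    0 < n ->
    (forall k j, k < j -> j <= n ->
       derivable n reflOK ((i, ws k, ws j) :: R, G)) ->
    derivable n reflOK (R, G)
| d_pr : forall R G (i : 'I_m) w u A,
    iconnected i R w u ->
    derivable n reflOK (R, (w, DiaA i A) :: (u, A) :: G) ->
    derivable n reflOK (R, (w, DiaA i A) :: G).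

Definition derivable_full m n (s : sequent m) := derivable n (fun _ => true) s.
Definition derivable_no_refl m n (i : 'I_m) (s : sequent m) :=
  derivable n (fun j => j != i) s.

From Stdlib Require Import List Permutation Relations.
From mathcomp Require Import all_boot.

Set Implicit Arguments.
Unset Strict Implicit.

(* A derivation of R, Gamma is simulated by one of R', Gamma for a context
   R' included in R that keeps every atom of the agents j <> i and keeps the
   R_i-atoms of R only up to undirected R_i-connectivity in R'.  Atoms added
   by (refl_i) and (eucl_i) are already connected in R', so those rules are
   simply dropped, and an instance of (<i>) on an atom R_i w u becomes an
   instance of (Pr_i), whose side condition asks for connectivity only.
   Freshness survives because R' has no more labels than R. *)

Lemma In_Permutation_cons (A : Type) (a : A) (l : list A) :
  In a l -> exists l', Permutation l (a :: l').
Proof.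
move=> /(in_split _ _) [l1 [l2 ->]]; exists (l1 ++ l2)%list.
by apply: Permutation_sym; apply: Permutation_middle.
Qed.

Lemma In2_Permutation_cons2 (A : Type) (a b : A) (l : list A) :
  In a l -> In b l -> a <> b -> exists l', Permutation l (a :: b :: l').
Proof.
move=> Ha Hb Hab; have [la Hla] := In_Permutation_cons Ha.
have [|lb Hlb] := @In_Permutation_cons _ b la.
  by case: (Permutation_in _ Hla Hb) => // Eab; case: Hab.
by exists lb; apply: Permutation_trans Hla _; apply: perm_skip.
Qed.

Section Simulation.
Variables (m n : nat) (i : 'I_m).
Implicit Types (R : list (ratom m)) (G : list (lform m)).

Lemma iconnected_sym (j : 'I_m) R x y :
  iconnected j R x y -> iconnected j R y x.
Proof.
elim=> [a b Hab | a | a b c _ IHab _ IHbc].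
- by apply: rt_step; case: Hab; [right | left].
- exact: rt_refl.
- exact: rt_trans IHbc IHab.
Qed.

Lemma iconnected_mono (j : 'I_m) R R' x y :
  (forall a b, In (j, a, b) R -> iconnected j R' a b) ->
  iconnected j R x y -> iconnected j R' x y.
Proof.
move=> HR; elim=> [a b [Hab | Hba] | a | a b c _ IHab _ IHbc].
- exact: HR.
- exact/iconnected_sym/HR.
- exact: rt_refl.
- exact: rt_trans IHab IHbc.
Qed.

Lemma iconnected_incl (j : 'I_m) R R' x y :
  incl R R' -> iconnected j R x y -> iconnected j R' x y.
Proof.
by move=> HRR'; apply: iconnected_mono => a b Hab; apply/rt_step; left; apply: HRR'.
Qed.

Lemma fresh_incl v R R' G : incl R' R -> fresh v R G -> fresh v R' G.
Proof.
move=> HR'R [HvR HvG]; split=> // HvR'; apply: HvR.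
move: HvR' => /in_flat_map [a [Ha Hva]].
by apply/in_flat_map; exists a; split=> //; apply: HR'R.
Qed.

(* When u = v the context may hold R_j w u only once, so (eucl_j) cannot be
   applied; (refl_j) adds R_j u u instead. *)
Lemma derivable_eucl_in (reflOK : 'I_m -> bool) (j : 'I_m) R G w u v :
  reflOK j -> In (j, w, u) R -> In (j, w, v) R ->
  derivable n reflOK ((j, u, v) :: R, G) -> derivable n reflOK (R, G).
Proof.
move=> Hj Hwu Hwv Huv; have [Euv | Nuv] := u =P v.
  by rewrite -Euv in Huv; apply: d_refl Hj Huv.
have [|R0 HR] := In2_Permutation_cons2 Hwu Hwv; first by case.
apply: d_perm (Permutation_sym HR) (Permutation_refl G) _.
apply: d_eucl; apply: d_perm _ (Permutation_refl G) Huv.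
exact: Permutation_trans (perm_skip _ HR) (Permutation_middle [:: _; _] R0 _).
Qed.

Record simulates R R' : Prop := {
  simulates_incl : incl R' R;
  simulates_other : forall j x y, j <> i -> In (j, x, y) R -> In (j, x, y) R';
  simulates_connected_i : forall x y, In (i, x, y) R -> iconnected i R' x y }.

Lemma simulates_refl R : simulates R R.
Proof. by split=> // x y Hxy; apply/rt_step; left. Qed.

Lemma simulates_iconnected R R' (j : 'I_m) x y :
  simulates R R' -> iconnected j R x y -> iconnected j R' x y.
Proof.
case=> _ Hother Hi; apply: iconnected_mono => a b Hab.
have [Eji | Hj] := j =P i; first by subst j; apply: Hi.
by apply/rt_step; left; apply: Hother.
Qed.

Lemma simulates_cons a R R' : simulates R R' -> simulates (a :: R) (a :: R').
Proof.
case=> Hincl Hother Hi; split.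
- exact: incl_cons (in_eq _ _) (incl_tl _ Hincl).
- by move=> j x y Hj [<- | Hxy]; [left | right; apply: Hother].
- move=> x y [Ea | Hxy]; first by apply/rt_step; left; rewrite Ea; left.
  by apply: iconnected_incl (Hi _ _ Hxy); apply: incl_tl; apply: incl_refl.
Qed.

Lemma simulates_app L R R' :
  simulates R R' -> simulates (L ++ R)%list (L ++ R')%list.
Proof. by elim: L => //= a L IH /IH; apply: simulates_cons. Qed.

Lemma simulates_perm R1 R2 R' :
  Permutation R1 R2 -> simulates R1 R' -> simulates R2 R'.
Proof.
move=> HR [Hincl Hother Hi]; have HR21 := Permutation_in _ (Permutation_sym HR).
split=> [a Ha | j x y Hj Hxy | x y Hxy].
- exact: Permutation_in HR (Hincl _ Ha).
- exact/Hother/HR21.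
- exact/Hi/HR21.
Qed.

Lemma simulates_add_i R R' x y :
  iconnected i R' x y -> simulates R R' -> simulates ((i, x, y) :: R) R'.
Proof.
move=> Hxy [Hincl Hother Hi]; split.
- exact: incl_tl.
- by move=> j a b Hj [[Eji _ _] | Hab]; [case: Hj | apply: Hother].
- by move=> a b [[<- <-] | Hab] //; apply: Hi.
Qed.

Lemma derivable_drop_refl (reflOK reflOK' : 'I_m -> bool) s :
  (forall j, j != i -> reflOK' j) -> derivable n reflOK s ->
  forall R', simulates s.1 R' -> derivable n reflOK' (R', s.2).
Proof.
move=> Hrefl'; elim=> {s} /=.
- move=> R R0 G G' HR HG _ IH R' Hsim.
  exact/(d_perm (Permutation_refl R') HG)/IH/(simulates_perm (Permutation_sym HR)).
- by move=> *; apply: d_id.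
- by move=> R G w A B _ IH1 _ IH2 R' Hsim; apply: d_and; [apply: IH1 | apply: IH2].
- by move=> R G w A B _ IH R' Hsim; apply/d_or/IH.
- move=> R G w v j A Hv _ IH R' Hsim.
  exact: d_boxA (fresh_incl (simulates_incl Hsim) Hv) (IH _ (simulates_cons _ Hsim)).
- move=> R G w v A Hv _ IH R' Hsim.
  exact: d_box (fresh_incl (simulates_incl Hsim) Hv) (IH _ Hsim).
- by move=> R G w u A _ IH R' Hsim; apply/d_dia/IH.
- move=> R G u v Hv _ IH R' Hsim.
  exact: d_ioa (fresh_incl (simulates_incl Hsim) Hv) (IH _ (simulates_app _ Hsim)).
- move=> R G j w u A _ IH R' Hsim; apply: d_pr (IH _ Hsim).
  by apply: simulates_iconnected Hsim _; apply/rt_step; left; left.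
- move=> R G j w _ _ IH R' Hsim; have [Eji | Hji] := j =P i.
    by apply: IH; rewrite Eji; apply: simulates_add_i (rt_refl _ _ _) Hsim.
  by apply: (d_refl (i := j) (w := w)); [apply/Hrefl'/eqP | apply/IH/simulates_cons].
- move=> R G j w u v _ IH R' Hsim.
  have Hwu : In (j, w, u) ((j, w, u) :: (j, w, v) :: R) by left.
  have Hwv : In (j, w, v) ((j, w, u) :: (j, w, v) :: R) by right; left.
  have Hmove := Permutation_middle [:: (j, w, u); (j, w, v)] R (j, u, v).
  have [Eji | Hji] := j =P i.
    subst j; apply/IH/(simulates_perm Hmove)/(simulates_add_i _ Hsim).
    exact: rt_trans (iconnected_sym (simulates_connected_i Hsim Hwu))
                    (simulates_connected_i Hsim Hwv).
  apply: (derivable_eucl_in (j := j) (w := w)).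
  + exact/Hrefl'/eqP.
  + exact: simulates_other Hsim _ _ _ Hji Hwu.
  + exact: simulates_other Hsim _ _ _ Hji Hwv.
  + exact/IH/(simulates_perm Hmove)/simulates_cons.
- move=> R G j ws Hn _ IH R' Hsim; apply: d_apc Hn _ => k l Hkl Hl.
  exact/(IH k l Hkl Hl)/simulates_cons.
- move=> R G j w u A Hwu _ IH R' Hsim.
  exact: d_pr (simulates_iconnected Hsim Hwu) (IH _ Hsim).
Qed.

End Simulation.

Theorem lemma2 (m n : nat) (i : 'I_m) (s : sequent m) :
  1 <= m -> derivable_full n s -> derivable_no_refl n i s.
Proof.
(* 1 <= m is already implied by i : 'I_m. *)
move=> _ Hs; case: s Hs => R G Hs.
exact: derivable_drop_refl (fun j (Hj : j != i) => Hj) Hs _ (simulates_refl i R).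
Qed.
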